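(* Fix integers $n,N,k\geq1$, let $V=\mathbb{C}[z_0,\ldots,z_n]_k^{\oplus(N+1)}$, and let $V^{(1)}\subset V$ be the set of tuples $\psi=(\psi_0,\ldots,\psi_N)$ whose components do not simultaneously vanish on any codimension-one subvariety of $\mathbb{P}^n$, each defining a rational map $\psi:\mathbb{P}^n\dashrightarrow\mathbb{P}^N$. Let $V^{(2)}\subset V^{(1)}$ be the subset of $\psi$ such that $\psi$ is an immersion at a generic point of $\mathbb{P}^n$. Then $V^{(2)}$ is Zariski open in $V^{(1)}$. *)

From HB Require Import structures.
From mathcomp Require Import all_boot all_algebra.
From mathcomp Require Import complex.
From mathcomp Require Import Rstruct.
From mathcomp Require Import mpoly.
Set Implicit Arguments. Unset Strict Implicit. Unset Printing Implicit Defensive.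
Import GRing.Theory.
Local Open Scope ring_scope.

Definition C : closedFieldType := complex Rdefinitions.R.

(* A point of the affine cone C^{n+1} over P^n (homogeneous coordinates z_0..z_n). *)
Definition cpoint (n : nat) := 'I_n.+1 -> C.

Definition ptuple (n N : nat) := 'I_N.+1 -> {mpoly C[n.+1]}.

Definition inV (n N k : nat) (psi : ptuple n N) : Prop :=
  forall i, psi i \is k.-homog.

(* A hypersurface (codimension-one subvariety) of P^n is the zero locus of a
   nonconstant homogeneous polynomial h. *)
Definition nonconst_homog (n : nat) (h : {mpoly C[n.+1]}) : Prop :=
  h != 0 /\ exists d : nat, (0 < d)%N /\ h \is d.-homog.

Definition vanish_on (n N : nat) (psi : ptuple n N) (h : {mpoly C[n.+1]}) : Prop :=
  forall z : cpoint n, h.@[z] = 0 -> forall i, (psi i).@[z] = 0.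

Definition inV1 (n N k : nat) (psi : ptuple n N) : Prop :=
  inV k psi /\ ~ (exists h, nonconst_homog h /\ vanish_on psi h).

(* Immersion of [psi] : P^n --> P^N at the point [z]:
   psi is defined at [z] (some psi_i(z) <> 0) and the differential
   T_[z]P^n = C^{n+1}/Cz  -->  T_[psi z]P^N = C^{N+1}/C psi(z),
   v |-> J(z) v  (J = Jacobian matrix (d psi_i / d z_j)), is injective. *)
Definition immersion_at (n N : nat) (psi : ptuple n N) (z : cpoint n) : Prop :=
  (exists i, (psi i).@[z] != 0) /\
  forall v : cpoint n,
    (exists c : C, forall i,
        \sum_(j < n.+1) ((psi i)^`M(j)).@[z] * v j = c * (psi i).@[z]) ->
    exists a : C, forall j, v j = a * z j.

(* psi is an immersion at a generic point of P^n: the immersion locus contains a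
   nonempty Zariski open subset (the nonvanishing locus of a nonzero polynomial). *)
Definition generic_immersion (n N : nat) (psi : ptuple n N) : Prop :=
  exists g : {mpoly C[n.+1]}, g != 0 /\
    forall z : cpoint n, g.@[z] != 0 -> immersion_at psi z.

Definition inV2 (n N k : nat) (psi : ptuple n N) : Prop :=
  inV1 k psi /\ generic_immersion psi.

(* Polynomial (regular) functions on V: polynomials in finitely many of the
   coefficients of the components psi_i. *)
Definition poly_fun (n N : nat) (f : ptuple n N -> C) : Prop :=
  exists (m : nat) (idx : 'I_m -> 'I_N.+1 * 'X_{1..n.+1}) (P : {mpoly C[m]}),
    forall psi, f psi = P.@[fun j => (psi (idx j).1)@_(idx j).2].

(* B is Zariski open in A (subspace topology): B /\ A = A minus the common
   zero set of some family of polynomial functions. *)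
Definition zariski_open_in (n N : nat) (A B : ptuple n N -> Prop) : Prop :=
  exists (I : Type) (F : I -> ptuple n N -> C),
    (forall i, poly_fun (F i)) /\
    forall psi, A psi -> (B psi <-> exists i, F i psi != 0).

From HB Require Import structures.
From mathcomp Require Import all_boot all_algebra.
From mathcomp Require Import complex.
From mathcomp Require Import Rstruct.
From mathcomp Require Import mpoly.
Set Implicit Arguments. Unset Strict Implicit. Unset Printing Implicit Defensive.
Import GRing.Theory.
Local Open Scope ring_scope.

(* By Euler's identity J_psi(z) z = k psi(z), so for k >= 1 the map psi is an
   immersion at [z] iff psi(z) <> 0 and the Jacobian J_psi(z) is injective, i.e.
   det (W J_psi(z)) psi_i(z) <> 0 for some matrix W and index i.  For fixed
   (z, W, i) this quantity is a polynomial in the coefficients of psi, and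
   V^(2) is the complement in V^(1) of the common zero set of this family:
   a nonzero polynomial g has a non-root z, at which a generic immersion is an
   immersion; conversely, if det (W J_psi(z)) psi_i(z) <> 0, then
   det (W J_psi) psi_i is a nonzero polynomial in z off whose zero set psi is
   an immersion. *)

Lemma base_digits_inj D n (f g : 'I_n -> nat) :
  (forall i, f i < D)%N -> (forall i, g i < D)%N ->
  (\sum_(i < n) f i * D ^ i = \sum_(i < n) g i * D ^ i)%N -> f =1 g.
Proof.
elim: n f g => [|n IHn] f g ltfD ltgD; first by move=> _ [].
have shift h : (\sum_(i < n.+1) h i * D ^ i
                 = h ord0 + D * \sum_(i < n) h (lift ord0 i) * D ^ i)%N.
  rewrite big_ord_recl muln1 big_distrr; congr (_ + _).
  by apply: eq_bigr => i _; rewrite expnS mulnCA.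
have D_gt0 : (0 < D)%N by apply: leq_ltn_trans (ltfD ord0).
rewrite !shift => E.
have E0 : f ord0 = g ord0.
  by move/(congr1 (modn^~ D)): E; rewrite !(addnC (_ ord0)) !(mulnC D) !modnMDl !modn_small.
move: E; rewrite E0 => /addnI /eqP; rewrite eqn_mul2l eqn0Ngt D_gt0 => /eqP E i.
have {}IHn := IHn _ _ (fun i => ltfD _) (fun i => ltgD _) E.
by case: (unliftP ord0 i) => [j ->|->].
Qed.

Lemma poly_neq0_eval (R : numDomainType) (q : {poly R}) : q != 0 -> exists t, q.[t] != 0.
Proof.
move=> q0; pose ts := [seq (i%:R : R) | i <- iota 0 (size q)].
have [/hasP [t _ qt]|/hasPn roots] := boolP (has (fun t => q.[t] != 0) ts); first by exists t.
suff : (size ts < size q)%N by rewrite size_map size_iota ltnn.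
apply: max_poly_roots q0 _ _; first by apply/allP => t /roots; rewrite negbK.
by rewrite map_inj_uniq ?iota_uniq // => a b /eqP; rewrite Num.Theory.eqr_nat => /eqP.
Qed.

Lemma mpoly_neq0_eval (R : numDomainType) n (p : {mpoly R[n]}) :
  p != 0 -> exists z : 'I_n -> R, p.@[z] != 0.
Proof.
move=> p0; pose D := msize p.
(* Kronecker substitution z_i := t ^+ (D ^ i): the exponents of a monomial of p
   are < D, so they are its base-D digits and distinct monomials of p become
   distinct powers of t. *)
pose code (m : 'X_{1..n}) := (\sum_(i < n) m i * D ^ i)%N.
pose q : {poly R} := \sum_(m <- msupp p) p@_m *: 'X^(code m).
have qE t : q.[t] = p.@[fun i => t ^+ (D ^ i)].
  rewrite mevalE horner_sum; apply: eq_bigr => m _; rewrite hornerZ hornerXn -prodrXr.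
  by congr (_ * _); apply: eq_bigr => i _; rewrite -exprM mulnC.
have ltD m : m \in msupp p -> forall i, (m i < D)%N.
  move=> mp i; apply: leq_ltn_trans (msize_mdeg_lt mp).
  by rewrite mdegE (bigD1 i) //= leq_addr.
have [m0 m0p] : exists m0, m0 \in msupp p.
  by case E: (msupp p) p0 => [|m0 s]; rewrite -msupp_eq0 E //; exists m0; rewrite inE eqxx.
suff /poly_neq0_eval [t] : q != 0 by rewrite qE; exists (fun i => t ^+ (D ^ i)).
apply/eqP => /(congr1 (fun r : {poly R} => r`_(code m0))).
rewrite coef0 coef_sum (big_rem m0) //= coefZ coefXn eqxx mulr1 big1_seq ?addr0.
  by apply/eqP; rewrite -mcoeff_msupp.
move=> m /andP [_]; rewrite mem_rem_uniq ?msupp_uniq // inE => /andP [m_neq mp].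
rewrite coefZ coefXn; case: eqP => [E|]; last by rewrite mulr0.
by case/eqP: m_neq; apply/mnmP => i; rewrite (base_digits_inj (ltD _ mp) (ltD _ m0p) (esym E)).
Qed.

Lemma msize_dhomog (R : nzRingType) n k (p : {mpoly R[n]}) :
  p \is k.-homog -> (msize p <= k.+1)%N.
Proof.
move=> p_homog; rewrite msizeE; apply/bigmax_leqP_seq => m mp _.
by rewrite (dhomog_mf p_homog mp).
Qed.

Lemma linear_mpolywE (R : nzRingType) n d (l : {mpoly R[n]} -> R) (p : {mpoly R[n]}) :
  {morph l : q r / q + r} -> (forall c q, l (c *: q) = c * l q) -> (msize p <= d)%N ->
  l p = \sum_(m : 'X_{1..n < d}) p@_m * l 'X_[m].
Proof.
move=> lD lZ p_size; have l0 : l 0 = 0 by rewrite -(scale0r 0) lZ mul0r.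
by rewrite {1}(mpolywE p_size) (big_morph l lD l0); apply: eq_bigr => m _; rewrite lZ.
Qed.

Lemma mderivX_euler (R : comNzRingType) n (m : 'X_{1..n}) (z : 'I_n -> R) :
  \sum_(j < n) ('X_[m]^`M(j)).@[z] * z j = (mdeg m)%:R * 'X_[m].@[z].
Proof.
rewrite mdegE natr_sum mulr_suml; apply: eq_bigr => j _.
rewrite mderivX mevalZ -mulrA; case: (posnP (m j)) => [-> | mj_gt0]; first by rewrite !mul0r.
have le_Um : (U_(j) <= m)%MM.
  by apply/mnm_lepP => i; rewrite mnm1E; case: eqP => [<-|].
by congr (_ * _); rewrite -[in RHS](submK le_Um) mpolyXD mevalM mevalXU.
Qed.

Lemma homog_euler (R : comNzRingType) n k (p : {mpoly R[n]}) (z : 'I_n -> R) :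
  p \is k.-homog -> \sum_(j < n) (p^`M(j)).@[z] * z j = k%:R * p.@[z].
Proof.
move=> p_homog; have p_size := msize_dhomog p_homog.
have derivE j : (p^`M(j)).@[z] = \sum_(m : 'X_{1..n < k.+1}) p@_m * ('X_[m]^`M(j)).@[z].
  by apply: (linear_mpolywE (l := fun q => (q^`M(j)).@[z])) => // [q r | c q];
    rewrite ?mderivD ?mevalD ?mderivZ ?mevalZ.
under eq_bigr => j _ do rewrite derivE mulr_suml.
rewrite exchange_big (linear_mpolywE (mevalD z) (mevalZ z) p_size) mulr_sumr.
apply: eq_bigr => m _; under eq_bigr do rewrite -mulrA.
rewrite -mulr_sumr mderivX_euler mulrCA.
have [->|pm_neq0] := eqVneq p@_m 0; first by rewrite !(mul0r, mulr0).
by rewrite (dhomog_mf p_homog) // mcoeff_msupp.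
Qed.

Lemma row_full_kerP (F : fieldType) m n (A : 'M[F]_(m, n)) :
  reflect (forall v : 'cV_n, A *m v = 0 -> v = 0) (row_full A).
Proof.
apply: (iffP idP) => [A_full v Av0 | A_inj].
  by apply: (row_full_inj A_full); rewrite Av0 mulmx0.
rewrite /row_full -mxrank_tr; apply: inj_row_free => v vA0.
apply: trmx_inj; rewrite trmx0; apply: A_inj.
by rewrite -(trmxK A) -trmx_mul vA0 trmx0.
Qed.

Lemma row_full_detP (F : fieldType) m n (A : 'M[F]_(m, n)) :
  reflect (exists B : 'M_(n, m), \det (B *m A) != 0) (row_full A).
Proof.
apply: (iffP row_fullP) => [[B BA1] | [B detBA]].
  by exists B; rewrite BA1 det1 oner_neq0.
have BA_unit : B *m A \in unitmx by rewrite unitmxE unitfE.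
by exists (invmx (B *m A) *m B); rewrite -mulmxA mulVmx.
Qed.

Definition jacobian n N (psi : ptuple n N) (z : cpoint n) : 'M[C]_(N.+1, n.+1) :=
  \matrix_(i, j) ((psi i)^`M(j)).@[z].

Lemma jacobian_mul_col n N (psi : ptuple n N) z (v : cpoint n) (c : C) :
  (forall i, \sum_(j < n.+1) ((psi i)^`M(j)).@[z] * v j = c * (psi i).@[z]) <->
  jacobian psi z *m \col_j v j = c *: \col_i (psi i).@[z].
Proof.
have colE i : (jacobian psi z *m \col_j v j) i 0 = \sum_(j < n.+1) ((psi i)^`M(j)).@[z] * v j.
  by rewrite mxE; apply: eq_bigr => j _; rewrite !mxE.
split=> [Jv | /matrixP Jv i]; last by rewrite -colE Jv !mxE.
by apply/matrixP => i l; rewrite ord1 colE Jv !mxE.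
Qed.

Lemma jacobian_euler n N k (psi : ptuple n N) z : inV k psi ->
  jacobian psi z *m \col_j z j = k%:R *: \col_i (psi i).@[z].
Proof. by move=> psi_homog; apply/jacobian_mul_col => i; apply: homog_euler. Qed.

Lemma immersion_atP n N k (psi : ptuple n N) z : inV k.+1 psi ->
  immersion_at psi z <-> (exists i, (psi i).@[z] != 0) /\ row_full (jacobian psi z).
Proof.
move=> psi_homog; have Jz := jacobian_euler z psi_homog.
have k1_neq0 : k.+1%:R != 0 :> C by rewrite Num.Theory.pnatr_eq0.
have colK (v : 'cV[C]_n.+1) : \col_j v j 0 = v by apply/matrixP => j l; rewrite mxE ord1.
split=> -[[i psi_i] J_inj]; (split; first by exists i).
- apply/row_full_kerP => v Jv.
  have [a va] : exists a, forall j, v j 0 = a * z j.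
    by apply: J_inj; exists 0; apply/jacobian_mul_col; rewrite colK Jv scale0r.
  have vE : v = a *: \col_j z j by apply/matrixP => j l; rewrite ord1 va !mxE.
  have /matrixP/(_ i 0) := Jv; rewrite vE -scalemxAr Jz scalerA !mxE => /eqP.
  by rewrite !mulf_eq0 (negbTE k1_neq0) (negbTE psi_i) !orbF => /eqP ->; rewrite scale0r.
- move=> v [c /jacobian_mul_col Jv]; exists (c / k.+1%:R) => j.
  suff /matrixP/(_ j 0) : \col_j v j - (c / k.+1%:R) *: \col_j z j = 0.
    by rewrite !mxE => /eqP; rewrite subr_eq0 => /eqP.
  move/row_full_kerP: J_inj; apply.
  by rewrite mulmxBr -scalemxAr Jv Jz scalerA divfK // subrr.
Qed.

Section CoefficientPolynomials.
Variables n N k : nat.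

(* Coordinates on V: one variable per component psi_i and per monomial of degree <= k. *)
Definition ncoefs := #|{: 'I_N.+1 * 'X_{1..n.+1 < k.+1}}|.

Definition coef_index (j : 'I_ncoefs) : 'I_N.+1 * 'X_{1..n.+1} :=
  ((enum_val j).1, val (enum_val j).2).

Definition coefs (psi : ptuple n N) (j : 'I_ncoefs) : C :=
  (psi (coef_index j).1)@_(coef_index j).2.

Definition coef_form (i : 'I_N.+1) (l : {mpoly C[n.+1]} -> C) : {mpoly C[ncoefs]} :=
  \sum_(j < ncoefs | (coef_index j).1 == i) l 'X_[(coef_index j).2] *: 'X_j.

Lemma coef_formE (psi : ptuple n N) i (l : {mpoly C[n.+1]} -> C) :
  inV k psi -> {morph l : p q / p + q} -> (forall c p, l (c *: p) = c * l p) ->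
  (coef_form i l).@[coefs psi] = l (psi i).
Proof.
move=> psi_homog lD lZ; rewrite (linear_mpolywE lD lZ (msize_dhomog (psi_homog i))).
rewrite raddf_sum /= big_mkcond /=.
transitivity (\sum_(a < N.+1) \sum_(m : 'X_{1..n.+1 < k.+1})
    if a == i then l 'X_[val m] * (psi a)@_(val m) else 0).
  rewrite pair_bigA [RHS](big_enum_val (A := predT)) /=; apply: eq_bigr => j _.
  by case: ifP => // _; rewrite mevalZ mevalXU.
rewrite (bigD1 i) //= [X in _ + X]big1 => [|a /negbTE a_neq_i]; last first.
  by apply: big1 => m _; rewrite a_neq_i.
by rewrite addr0; apply: eq_bigr => m _; rewrite eqxx mulrC.
Qed.

Definition immersion_form (z : cpoint n) (W : 'M[C]_(n.+1, N.+1)) (i : 'I_N.+1) :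
    {mpoly C[ncoefs]} :=
  \det (\matrix_(a, b) \sum_(c < N.+1) W a c *: coef_form c (fun p => (p^`M(b)).@[z]))
  * coef_form i (meval z).

Lemma immersion_formE (psi : ptuple n N) z W i : inV k psi ->
  (immersion_form z W i).@[coefs psi] = \det (W *m jacobian psi z) * (psi i).@[z].
Proof.
move=> psi_homog; rewrite mevalM -det_map_mx (coef_formE _ psi_homog (mevalD z) (mevalZ z)).
congr (\det _ * _); apply/matrixP => a b; rewrite !mxE raddf_sum; apply: eq_bigr => c _.
rewrite /= mevalZ coef_formE ?mxE // => [p q | d p]; first by rewrite mderivD mevalD.
by rewrite mderivZ mevalZ.
Qed.

End CoefficientPolynomials.

Definition immersion_poly n N (psi : ptuple n N) (W : 'M[C]_(n.+1, N.+1)) (i : 'I_N.+1) :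
    {mpoly C[n.+1]} :=
  \det (\matrix_(a, b) \sum_(c < N.+1) W a c *: (psi c)^`M(b)) * psi i.

Lemma immersion_polyE n N (psi : ptuple n N) W i z :
  (immersion_poly psi W i).@[z] = \det (W *m jacobian psi z) * (psi i).@[z].
Proof.
rewrite mevalM -det_map_mx; congr (\det _ * _); apply/matrixP => a b.
by rewrite !mxE raddf_sum; apply: eq_bigr => c _; rewrite /= mevalZ mxE.
Qed.

Theorem lemma9 (n N k : nat) (hn : (1 <= n)%N) (hN : (1 <= N)%N) (hk : (1 <= k)%N) :
  zariski_open_in (@inV1 n N k) (@inV2 n N k).
Proof.
case: k hk => [//|k] _.
exists ((cpoint n * 'M[C]_(n.+1, N.+1)) * 'I_N.+1)%type.
exists (fun '(z, W, i) psi => (immersion_form k.+1 z W i).@[coefs psi]).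
split=> [[[z W] i] | psi psi_V1].
  by exists (ncoefs n N k.+1), (@coef_index n N k.+1), (immersion_form k.+1 z W i).
have [psi_homog _] := psi_V1.
split=> [[_ [g [g_neq0 g_immersion]]] | [[[z W] i]]].
- have [z gz] := mpoly_neq0_eval g_neq0.
  have /(immersion_atP z psi_homog) [[i psi_i] /row_full_detP [W det_neq0]] := g_immersion z gz.
  by exists (z, W, i); rewrite immersion_formE // mulf_neq0.
- rewrite immersion_formE // -(immersion_polyE psi W i z) => poly_neq0; split=> //.
  exists (immersion_poly psi W i); split=> [|z'].
    by apply: contra_neq poly_neq0 => ->; rewrite meval0.
  rewrite immersion_polyE mulf_eq0 negb_or => /andP [det_neq0 psi_i].
  by apply/(immersion_atP z' psi_homog); split; [exists i | apply/row_full_detP; exists W].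
Qed.
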